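(* Let $L$ be an ultraparacompact locale with $\bot\neq\top$, $B$ its Boolean algebra of complemented opens, $\mathcal{J}$ the set of partitions of $L$, and $F$ a $B_{\mathcal{J}}$-set with étale space $\sigma\colon E(F)\to L$. Then the space of points $\mathrm{pt}\,E(F)$ is homeomorphic to $\sum_{p\in\mathrm{pt}L}|F|/{\equiv_p}$, where $x\equiv_p y$ iff there is $b\in B$ with $p\in b$ and $x\equiv_b y$, equipped with the topology generated by the subbasic open sets $[x\,|\,b]=\{[x]_p: p\in b\}$ for $x\in|F|$, $b\in B$.
   Context: Partitions of $L$: sets $P$ of opens, pairwise disjoint ($u\wedge v=\bot$ for $u\neq v$), not containing $\bot$, with $\bigvee P=\top$; their members are complemented. $L$ ultraparacompact: every open is a join of complemented opens and every cover is refined by a partition. A $B_{\mathcal{J}}$-set $F$ is a set $|F|$ with binary operations $b(-,-)$ for $b\in B$ satisfying $b(x,x)=x$, $b(b(x,y),z)=b(x,z)$, $b(x,b(y,z))=b(x,z)$, $\top(x,y)=x$, $(\neg b)(x,y)=b(y,x)$, $(b\wedge c)(x,y)=b(c(x,y),y)$, and operations $P\colon|F|^P\to|F|$ for each $P\in\mathcal{J}$ satisfying $P(\lambda b.z)=z$, $P(\lambda b.b(x_b,y_b))=P(\lambda b.x_b)$, $b(P(x),x_b)=x_b$ for $b\in P$. For $b\in B$, $x\equiv_b y$ iff $b(x,y)=y$. $\mathcal{O}(L)$ is a $B_{\mathcal{J}}$-set with $b(u,v)=(b\wedge u)\vee(\neg b\wedge v)$ and $P(\lambda b.u_b)=\bigvee_{b\in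 P}(b\wedge u_b)$. The étale space $E(F)$ is the locale whose frame is the set of $B_{\mathcal{J}}$-set homomorphisms $F\to\mathcal{O}(L)$ ordered pointwise, and $\sigma^{-1}(u)=\mathrm{const}_u$. A point $p$ of $L$ is a frame map $\mathcal{O}(L)\to\{\bot,\top\}$; $p\in b$ means $p(b)=\top$. $[x]_p$ is the $\equiv_p$-class of $x$ in the fibre over $p$. *)

Unset Implicit Arguments.

Record Frame := {
  fcar :> Type;
  le : fcar -> fcar -> Prop;
  le_refl : forall x, le x x;
  le_trans : forall x y z, le x y -> le y z -> le x z;
  le_antisym : forall x y, le x y -> le y x -> x = y;
  top : fcar;
  bot : fcar;
  meet : fcar -> fcar -> fcar;
  join : (fcar -> Prop) -> fcar;
  top_max : forall x, le x top;
  bot_min : forall x, le bot x;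
  meet_glb : forall x y z, le z (meet x y) <-> (le z x /\ le z y);
  join_lub : forall (S : fcar -> Prop) z, le (join S) z <-> (forall s, S s -> le s z);
  meet_join_distr : forall x (S : fcar -> Prop),
      meet x (join S) = join (fun w => exists s, S s /\ w = meet x s)
}.

Arguments le {f}. Arguments top {f}. Arguments bot {f}.
Arguments meet {f}. Arguments join {f}.

Section FrameDefs.
Variable L : Frame.

Definition join2 (u v : L) : L := join (fun w => w = u \/ w = v).

Definition is_compl (u c : L) : Prop := meet u c = bot /\ join2 u c = top.
Definition complemented (u : L) : Prop := exists c, is_compl u c.

Definition B : Type := {u : L | complemented u}.

Definition is_partitionL (P : L -> Prop) : Prop :=
  (forall u v, P u -> P v -> u <> v -> meet u v = bot) /\
  (forall u, P u -> u <> bot) /\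
  join P = top.

Definition is_partitionB (P : B -> Prop) : Prop :=
  is_partitionL (fun u => exists b : B, P b /\ proj1_sig b = u).

Definition ultraparacompact : Prop :=
  (forall u : L, exists S : L -> Prop, (forall s, S s -> complemented s) /\ join S = u) /\
  (forall C : L -> Prop, join C = top ->
     exists P : L -> Prop, is_partitionL P /\
       (forall u, P u -> exists c, C c /\ le u c)).
End FrameDefs.

(** * Order-theoretic points: maps to {bot,top} = Prop preserving finite meets
    and arbitrary joins *)
Section Points.
Variable T : Type.
Variable R : T -> T -> Prop.
Definition is_top (t : T) := forall s, R s t.
Definition is_glb2 (x y z : T) := R z x /\ R z y /\ (forall w, R w x -> R w y -> R w z).
Definition is_lub (S : T -> Prop) (z : T) :=
  (forall s, S s -> R s z) /\ (forall w, (forall s, S s -> R s w) -> R z w).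
Definition is_point (p : T -> Prop) : Prop :=
  (forall t, is_top t -> p t) /\
  (forall x y z, is_glb2 x y z -> (p z <-> p x /\ p y)) /\
  (forall S z, is_lub S z -> (p z <-> exists s, S s /\ p s)).
End Points.

Record BJset (L : Frame) := {
  bcar :> Type;
  bop : B L -> bcar -> bcar -> bcar;
  Pop : forall P : B L -> Prop, is_partitionB L P -> ({b | P b} -> bcar) -> bcar;
  bop_idem : forall b x, bop b x x = x;
  bop_l : forall b x y z, bop b (bop b x y) z = bop b x z;
  bop_r : forall b x y z, bop b x (bop b y z) = bop b x z;
  bop_top : forall (b : B L) x y, proj1_sig b = top -> bop b x y = x;
  bop_neg : forall (b c : B L) x y, @is_compl L (proj1_sig b) (proj1_sig c) -> bop c x y = bop b y x;
  bop_meet : forall (b c d : B L) x y, proj1_sig d = meet (proj1_sig b) (proj1_sig c) ->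
      bop d x y = bop b (bop c x y) y;
  Pop_const : forall P HP z, Pop P HP (fun _ => z) = z;
  Pop_diag : forall P HP (x y : {b | P b} -> bcar),
      Pop P HP (fun b => bop (proj1_sig b) (x b) (y b)) = Pop P HP x;
  Pop_proj : forall P HP (x : {b | P b} -> bcar) (b : {b | P b}),
      bop (proj1_sig b) (Pop P HP x) (x b) = x b
}.

Arguments bop {L} _. Arguments Pop {L} _.

Section Etale.
Variable L : Frame.
Variable F : BJset L.

Definition is_hom (h : F -> L) : Prop :=
  (forall (b c : B L) x y, @is_compl L (proj1_sig b) (proj1_sig c) ->
     h (bop F b x y) = join2 L (meet (proj1_sig b) (h x)) (meet (proj1_sig c) (h y))) /\
  (forall P HP (x : {b | P b} -> F),
     h (Pop F P HP x) = join (fun w => exists i : {b | P b},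
                                 w = meet (proj1_sig (proj1_sig i)) (h (x i)))).

(** The frame of the etale space E(F), ordered pointwise *)
Definition Ehom : Type := {h : F -> L | is_hom h}.
Definition Ele (h k : Ehom) : Prop := forall x, le (proj1_sig h x) (proj1_sig k x).

Definition ptL : Type := {p : L -> Prop | is_point L (@le L) p}.
Definition ptE : Type := {P : Ehom -> Prop | is_point Ehom Ele P}.

Definition opens_ptE (U : ptE -> Prop) : Prop :=
  exists h : Ehom, forall P, U P <-> proj1_sig P h.

Definition equivp (p : ptL) (x y : F) : Prop :=
  exists b : B L, proj1_sig p (proj1_sig b) /\ bop F b x y = y.
Definition cls (p : ptL) (x : F) : F -> Prop := fun y => equivp p x y.

Definition SumSp : Type :=
  {pc : ptL * (F -> Prop) | exists x : F, snd pc = cls (fst pc) x}.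

Definition subbasic (U : SumSp -> Prop) : Prop :=
  exists (x : F) (b : B L), forall s : SumSp,
    U s <-> (proj1_sig (fst (proj1_sig s)) (proj1_sig b) /\
             snd (proj1_sig s) = cls (fst (proj1_sig s)) x).
End Etale.

Inductive gen_open (T : Type) (S : (T -> Prop) -> Prop) : (T -> Prop) -> Prop :=
| go_sub U : S U -> gen_open T S U
| go_top : gen_open T S (fun _ => True)
| go_inter U V : gen_open T S U -> gen_open T S V -> gen_open T S (fun t => U t /\ V t)
| go_union (G : (T -> Prop) -> Prop) :
    (forall U, G U -> gen_open T S U) -> gen_open T S (fun t => exists U, G U /\ U t)
| go_ext U V : gen_open T S U -> (forall t, U t <-> V t) -> gen_open T S V.

Definition homeomorphism (X Y : Type) (OX : (X -> Prop) -> Prop) (OY : (Y -> Prop) -> Prop)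
  (f : X -> Y) : Prop :=
  (forall a b, f a = f b -> a = b) /\ (forall y, exists x, f x = y) /\
  (forall U : Y -> Prop, OY U <-> OX (fun x => U (f x))).

From Stdlib Require Import ProofIrrelevance FunctionalExtensionality PropExtensionality.

(* A B_J-set homomorphism g : F -> O(L) is the same thing as a "local" map:
   b /\ g y = b /\ g z whenever y ==_b z.  So the opens of E(F) are closed under
   pointwise meets and joins, and contain for each x : F the open image
   [sect x] = y |-> \/ {b | x ==_b y} of the global section x; moreover every
   open h is the join of the opens [sect x /\ const (h x)].  Hence a point P of
   E(F) lies over the point p = P o const of L, contains some [sect x], and is
   then determined by P h <-> p (h x); the sections it contains form exactly
   the class [x]_p.  Conversely h |-> p (h x) is a point over p with class
   [x]_p.  Under this bijection [sect x /\ const b] corresponds to [x | b],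
   and since every open of L is a join of complemented ones, each open h of
   E(F) is the union of the [x | b] with b <= h x. *)

Section FrameTheory.
Context {L : Frame}.
Implicit Types (a x y z : L) (S : L -> Prop).

Lemma meet_lel x y : le (meet x y) x.
Proof. apply (proj1 (meet_glb L x y (meet x y))), le_refl. Qed.

Lemma meet_ler x y : le (meet x y) y.
Proof. apply (proj1 (meet_glb L x y (meet x y))), le_refl. Qed.

Lemma le_meet x y z : le z x -> le z y -> le z (meet x y).
Proof. intros; apply meet_glb; auto. Qed.

Lemma join_ub S x : S x -> le x (join S).
Proof. intros Hx; apply (proj1 (join_lub L S (join S)) (le_refl _ _)); auto. Qed.

Lemma join_le S z : (forall s, S s -> le s z) -> le (join S) z.
Proof. apply join_lub. Qed.

Lemma meetC x y : meet x y = meet y x.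
Proof. apply le_antisym; apply le_meet; (apply meet_lel || apply meet_ler). Qed.

Lemma meet_l x y : le x y -> meet x y = x.
Proof. intros; apply le_antisym; [apply meet_lel | apply le_meet; auto using le_refl]. Qed.

Lemma meetxT x : meet x top = x.
Proof. apply meet_l, top_max. Qed.

Lemma le_bot x : le x bot -> x = bot.
Proof. intros; apply le_antisym; auto using bot_min. Qed.

Lemma top_le x : le top x -> x = top.
Proof. intros; apply le_antisym; auto using top_max. Qed.

Lemma join2_ubl x y : le x (join2 L x y).
Proof. apply join_ub; auto. Qed.

Lemma join2_ubr x y : le y (join2 L x y).
Proof. apply join_ub; auto. Qed.

Lemma join2_le x y z : le x z -> le y z -> le (join2 L x y) z.
Proof. intros; apply join_le; intros s [-> | ->]; auto. Qed.

Lemma meet_join2 a x y : meet a (join2 L x y) = join2 L (meet a x) (meet a y).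
Proof.
  unfold join2 at 1; rewrite meet_join_distr; apply le_antisym.
  - apply join_le; intros s [t [[-> | ->] ->]]; [apply join2_ubl | apply join2_ubr].
  - apply join2_le; apply join_ub; eauto.
Qed.

Lemma meet_join_le a S z : (forall s, S s -> le (meet a s) z) -> le (meet a (join S)) z.
Proof. intros H; rewrite meet_join_distr; apply join_le; intros w [s [Hs ->]]; auto. Qed.

Lemma is_compl_sym x y : is_compl L x y -> is_compl L y x.
Proof.
  intros [Hm Hj]; split; [rewrite meetC; auto|].
  apply top_le; rewrite <- Hj; apply join2_le; [apply join2_ubr | apply join2_ubl].
Qed.

Lemma is_compl_meet x x' y y' : is_compl L x x' -> is_compl L y y' ->
  is_compl L (meet x y) (join2 L x' y').
Proof.
  intros [Hx Hx'] [Hy Hy']; split.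
  - apply le_bot; rewrite meet_join2; apply join2_le.
    + rewrite <- Hx; apply le_meet; [eapply le_trans; apply meet_lel | apply meet_ler].
    + rewrite <- Hy; apply le_meet; [| apply meet_ler].
      eapply le_trans; [apply meet_lel | apply meet_ler].
  - apply top_le; rewrite <- (meetxT top), <- Hx' at 1; rewrite <- Hy', meet_join2.
    apply join2_le.
    + rewrite meetC, meet_join2; apply join2_le.
      * rewrite meetC; apply join2_ubl.
      * eapply le_trans; [apply meet_ler | eapply le_trans; [apply join2_ubl | apply join2_ubr]].
    + eapply le_trans; [apply meet_ler | eapply le_trans; [apply join2_ubr | apply join2_ubr]].
Qed.

Lemma complemented_top : complemented L top.
Proof. exists bot; split; [apply le_bot, meet_ler | apply top_le, join2_ubl]. Qed.

Lemma complemented_meet x y : complemented L x -> complemented L y -> complemented L (meet x y).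
Proof. intros [x' Hx] [y' Hy]; eexists; apply is_compl_meet; eauto. Qed.
End FrameTheory.

Definition Btop (L : Frame) : B L := exist _ top complemented_top.

Definition Bmeet {L : Frame} (b c : B L) : B L :=
  exist _ (meet (proj1_sig b) (proj1_sig c))
    (complemented_meet _ _ (proj2_sig b) (proj2_sig c)).

Definition zero_dimensional (L : Frame) : Prop :=
  forall u : L, exists S : L -> Prop, (forall s, S s -> complemented L s) /\ join S = u.

Lemma point_mono (T : Type) (R : T -> T -> Prop) (p : T -> Prop) :
  (forall t, R t t) -> is_point T R p -> forall s t, R s t -> p s -> p t.
Proof.
  intros Rrefl Hp s t Rst Hs.
  apply (proj1 (proj2 Hp) s t s); [repeat split; auto | exact Hs].
Qed.

Section PointsOfFrame.
Context {L : Frame} (p : L -> Prop).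
Hypothesis p_point : is_point L le p.

Lemma point_top : p top.
Proof. apply (proj1 p_point); intros s; apply top_max. Qed.

Lemma point_meet x y : p (meet x y) <-> p x /\ p y.
Proof.
  apply (proj1 (proj2 p_point)); repeat split; [apply meet_lel | apply meet_ler |].
  intros; apply le_meet; auto.
Qed.

Lemma point_join S : p (join S) <-> exists s, S s /\ p s.
Proof.
  apply (proj2 (proj2 p_point)); split; [intros; apply join_ub | intros; apply join_le]; auto.
Qed.

Lemma point_le x y : le x y -> p x -> p y.
Proof. apply point_mono; [apply le_refl | exact p_point]. Qed.
End PointsOfFrame.

Section BJsetTheory.
Context {L : Frame} (F : BJset L).
Implicit Types (b c : B L) (x y z : F).

Definition eqv b x y : Prop := bop F b x y = y.

Lemma eqv_refl b x : eqv b x x.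
Proof. apply bop_idem. Qed.

Lemma eqv_sym b x y : eqv b x y -> eqv b y x.
Proof. unfold eqv; intros E; rewrite <- E at 1; rewrite bop_l; apply bop_idem. Qed.

Lemma eqv_trans b x y z : eqv b x y -> eqv b y z -> eqv b x z.
Proof. unfold eqv; intros Exy Eyz; rewrite <- Exy, bop_l in Eyz; exact Eyz. Qed.

Lemma eqv_le b c x y : le (proj1_sig c) (proj1_sig b) -> eqv b x y -> eqv c x y.
Proof.
  unfold eqv; intros Hcb E.
  rewrite (bop_meet L F c b c x y), E; [apply bop_idem | symmetry; apply meet_l, Hcb].
Qed.

Lemma eqv_meet_trans b c x y z : eqv b x y -> eqv c y z -> eqv (Bmeet b c) x z.
Proof.
  intros Exy Eyz; apply eqv_trans with y.
  - apply (eqv_le b); [apply meet_lel | exact Exy].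
  - apply (eqv_le c); [apply meet_ler | exact Eyz].
Qed.

Definition eqval x y : L :=
  join (fun u => exists b, proj1_sig b = u /\ eqv b x y).

Lemma eqv_le_eqval b x y : eqv b x y -> le (proj1_sig b) (eqval x y).
Proof. intros; apply join_ub; eauto. Qed.

Lemma eqval_refl x : eqval x x = top.
Proof. apply top_le, (eqv_le_eqval (Btop L)), eqv_refl. Qed.

Lemma eqval_sym x y : eqval x y = eqval y x.
Proof.
  assert (H : forall x y, le (eqval x y) (eqval y x)).
  { intros x' y'; apply join_le; intros u [b [<- E]]; apply eqv_le_eqval, eqv_sym, E. }
  apply le_antisym; apply H.
Qed.

Lemma eqval_trans x y z : le (meet (eqval x y) (eqval y z)) (eqval x z).
Proof.
  apply meet_join_le; intros u [c [<- Eyz]]; rewrite meetC; apply meet_join_le.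
  intros v [b [<- Exy]]; rewrite meetC.
  apply (eqv_le_eqval (Bmeet b c)), (eqv_meet_trans b c x y z); auto.
Qed.

Definition local (g : F -> L) : Prop :=
  forall b y z, eqv b y z -> meet (proj1_sig b) (g y) = meet (proj1_sig b) (g z).

Lemma local_intro (g : F -> L) :
  (forall b y z, eqv b y z -> le (meet (proj1_sig b) (g y)) (g z)) -> local g.
Proof.
  intros H b y z E; apply le_antisym; apply le_meet; try apply meet_lel; apply H; auto.
  apply eqv_sym, E.
Qed.

Lemma local_eqval_le (g : F -> L) x y : local g -> le (meet (eqval x y) (g x)) (g y).
Proof.
  intros Hg; rewrite meetC; apply meet_join_le; intros u [b [<- E]].
  rewrite meetC, (Hg b x y E); apply meet_ler.
Qed.

Lemma local_const (u : L) : local (fun _ => u).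
Proof. intros b y z _; reflexivity. Qed.

Lemma local_meet (g k : F -> L) : local g -> local k -> local (fun y => meet (g y) (k y)).
Proof.
  intros Hg Hk; apply local_intro; intros b y z E; apply le_meet.
  - eapply le_trans; [| apply (meet_ler (proj1_sig b))]; rewrite <- (Hg b y z E).
    apply le_meet; [apply meet_lel | eapply le_trans; [apply meet_ler | apply meet_lel]].
  - eapply le_trans; [| apply (meet_ler (proj1_sig b))]; rewrite <- (Hk b y z E).
    apply le_meet; [apply meet_lel | eapply le_trans; [apply meet_ler | apply meet_ler]].
Qed.

Lemma local_join (I : Type) (S : I -> Prop) (g : I -> F -> L) :
  (forall i, S i -> local (g i)) -> local (fun y => join (fun u => exists i, S i /\ u = g i y)).
Proof.
  intros Hg; apply local_intro; intros b y z E; apply meet_join_le; intros u [i [Si ->]].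
  rewrite (Hg i Si b y z E); eapply le_trans; [apply meet_ler | apply join_ub; eauto].
Qed.

Lemma local_eqval x : local (eqval x).
Proof.
  apply local_intro; intros b y z E; eapply le_trans; [| apply (eqval_trans x y z)].
  rewrite meetC; apply le_meet; [apply meet_lel |].
  eapply le_trans; [apply meet_ler | apply eqv_le_eqval, E].
Qed.

Lemma local_is_hom (g : F -> L) : local g -> is_hom L F g.
Proof.
  intros Hg; split.
  - intros b c x y Hc; set (w := bop F b x y).
    assert (Exw : eqv b x w) by apply bop_r.
    assert (Eyw : eqv c y w) by (unfold eqv, w; rewrite (bop_neg L F b c _ _ Hc); apply bop_l).
    rewrite (Hg b x w Exw), (Hg c y w Eyw), (meetC (proj1_sig b)), (meetC (proj1_sig c)).
    rewrite <- meet_join2, (proj2 Hc), meetxT; reflexivity.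
  - intros P HP x; set (v := Pop F P HP x).
    assert (Ev : forall i : {b | P b}, eqv (proj1_sig i) v (x i)) by apply Pop_proj.
    apply le_antisym.
    + rewrite <- (meetxT (g v)), <- (proj2 (proj2 HP)); apply meet_join_le.
      intros u [b [Pb <-]]; apply join_ub; exists (exist _ b Pb).
      rewrite meetC; apply (Hg b), (Ev (exist _ b Pb)).
    + apply join_le; intros u [i ->]; rewrite <- (Hg _ _ _ (Ev i)); apply meet_ler.
Qed.

Lemma is_hom_local (g : F -> L) : is_hom L F g -> local g.
Proof.
  intros [Hbop _] b y z E; destruct (proj2_sig b) as [c Hc].
  pose (cB := exist _ c (ex_intro _ _ (is_compl_sym _ _ Hc)) : B L).
  rewrite <- E, (Hbop b cB y z Hc), meet_join2; simpl.
  apply le_antisym.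
  - eapply le_trans; [| apply join2_ubl]; apply le_meet; [apply meet_lel | apply le_refl].
  - apply join2_le; [apply meet_ler |].
    eapply le_trans; [| apply bot_min]; rewrite <- (proj1 Hc).
    apply le_meet; [apply meet_lel | eapply le_trans; [apply meet_ler | apply meet_lel]].
Qed.
End BJsetTheory.

Section EquivAtPoint.
Context {L : Frame} (F : BJset L) (p : ptL L).
Implicit Types (x y : F).

Lemma equivp_refl x : equivp L F p x x.
Proof. exists (Btop L); split; [apply (point_top _ (proj2_sig p)) | apply eqv_refl]. Qed.

Lemma equivp_sym x y : equivp L F p x y -> equivp L F p y x.
Proof. intros [b [Hb E]]; exists b; split; [exact Hb | apply eqv_sym, E]. Qed.

Lemma point_eqval x y : proj1_sig p (eqval F x y) <-> equivp L F p x y.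
Proof.
  unfold eqval; rewrite (point_join _ (proj2_sig p)); split.
  - intros [u [[b [<- E]] Hb]]; exists b; auto.
  - intros [b [Hb E]]; exists (proj1_sig b); eauto.
Qed.

Lemma equivp_local (g : F -> L) x y :
  local F g -> equivp L F p x y -> proj1_sig p (g x) -> proj1_sig p (g y).
Proof.
  intros Hg Exy Hx; apply (point_le _ (proj2_sig p) _ _ (local_eqval_le F g x y Hg)).
  apply (point_meet _ (proj2_sig p)); split; [apply point_eqval |]; assumption.
Qed.
End EquivAtPoint.

Section EtaleSpace.
Context {L : Frame} (F : BJset L).
Notation E := (Ehom L F).
Notation Ele := (Ele L F).

Lemma Ehom_local (h : E) : local F (proj1_sig h).
Proof. apply is_hom_local, (proj2_sig h). Qed.

Definition Ehom_of (g : F -> L) (Hg : local F g) : E := exist _ g (local_is_hom F g Hg).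

Definition cstE (u : L) : E := Ehom_of _ (local_const F u).

Definition meetE (h k : E) : E :=
  Ehom_of _ (local_meet F _ _ (Ehom_local h) (Ehom_local k)).

Definition joinE (S : E -> Prop) : E :=
  Ehom_of _ (local_join F E S (@proj1_sig _ _) (fun h _ => Ehom_local h)).

Definition sect (x : F) : E := Ehom_of _ (local_eqval F x).

Lemma cstE_top : is_top E Ele (cstE top).
Proof. intros h y; apply top_max. Qed.

Lemma meetE_glb h k : is_glb2 E Ele h k (meetE h k).
Proof.
  repeat split; intros; try intro y; simpl; [apply meet_lel | apply meet_ler | apply le_meet; auto].
Qed.

Lemma joinE_lub S : is_lub E Ele S (joinE S).
Proof.
  split; intros h Hh y; simpl; [apply join_ub; eauto |].
  apply join_le; intros u [k [Sk ->]]; apply Hh, Sk.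
Qed.

Lemma glb_pointwise h k m :
  is_glb2 E Ele h k m -> forall y, proj1_sig m y = meet (proj1_sig h y) (proj1_sig k y).
Proof.
  intros [Hh [Hk Hglb]] y; apply le_antisym; [apply le_meet; [apply Hh | apply Hk] |].
  apply (Hglb (meetE h k)); apply meetE_glb.
Qed.

Lemma lub_pointwise S m :
  is_lub E Ele S m -> forall y, proj1_sig m y = proj1_sig (joinE S) y.
Proof.
  intros [Hub Hlub] y; apply le_antisym; [apply Hlub, joinE_lub |].
  apply (proj2 (joinE_lub S)), Hub.
Qed.

Lemma cstE_glb x y z : is_glb2 L le x y z -> is_glb2 E Ele (cstE x) (cstE y) (cstE z).
Proof.
  intros [Hx [Hy Hglb]]; repeat split; [intros w; apply Hx | intros w; apply Hy |].
  intros k Hkx Hky w; apply Hglb; [apply Hkx | apply Hky].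
Qed.

Lemma cstE_lub S z :
  is_lub L le S z -> is_lub E Ele (fun h => exists s, S s /\ h = cstE s) (cstE z).
Proof.
  intros [Hub Hlub]; split; [intros h [s [Ss ->]] y; apply Hub, Ss |].
  intros k Hk y; apply Hlub; intros s Ss; apply (Hk (cstE s)); eauto.
Qed.

Lemma Ehom_decomp (h : E) :
  is_lub E Ele (fun g => exists x, g = meetE (sect x) (cstE (proj1_sig h x))) h.
Proof.
  split.
  - intros g [x ->] y; simpl; apply local_eqval_le, Ehom_local.
  - intros k Hk y; eapply le_trans; [| apply (Hk _ (ex_intro _ y eq_refl))]; simpl.
    rewrite eqval_refl, meetC, meetxT; apply le_refl.
Qed.

Lemma meet_sect_le x y : Ele (meetE (sect x) (sect y)) (cstE (eqval F x y)).
Proof. intros z; simpl; rewrite (eqval_sym F y z); apply eqval_trans. Qed.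
End EtaleSpace.

Section PointsOfEtale.
Context {L : Frame} {F : BJset L} (P : ptE L F).
Notation holds h := (proj1_sig P h).

Lemma ptE_top : holds (cstE F top).
Proof. apply (proj1 (proj2_sig P)), cstE_top. Qed.

Lemma ptE_meet h k : holds (meetE F h k) <-> holds h /\ holds k.
Proof. apply (proj1 (proj2 (proj2_sig P))), meetE_glb. Qed.

Lemma ptE_le h k : Ele L F h k -> holds h -> holds k.
Proof. apply point_mono; [intros g y; apply le_refl | apply (proj2_sig P)]. Qed.

Lemma base_is_point : is_point L le (fun u => holds (cstE F u)).
Proof.
  split; [| split].
  - intros t Ht; rewrite (top_le t (Ht top)); apply ptE_top.
  - intros x y z Hz; apply (proj1 (proj2 (proj2_sig P))), cstE_glb, Hz.
  - intros S z Hz; rewrite (proj2 (proj2 (proj2_sig P)) _ _ (cstE_lub F S z Hz)); split.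
    + intros [h [[s [Ss ->]] Hs]]; eauto.
    + intros [s [Ss Hs]]; eauto.
Qed.

Definition base : ptL L := exist _ _ base_is_point.

Lemma ptE_decomp (h : Ehom L F) :
  holds h <-> exists x, holds (sect F x) /\ proj1_sig base (proj1_sig h x).
Proof.
  rewrite (proj2 (proj2 (proj2_sig P)) _ _ (Ehom_decomp F h)); split.
  - intros [g [[x ->] Hg]]; apply ptE_meet in Hg; exists x; exact Hg.
  - intros [x Hx]; exists (meetE F (sect F x) (cstE F (proj1_sig h x))).
    split; [eauto | apply ptE_meet; exact Hx].
Qed.

Lemma ptE_has_sect : exists x, holds (sect F x).
Proof. destruct (proj1 (ptE_decomp _) ptE_top) as [x [Hx _]]; eauto. Qed.

Lemma ptE_sect_iff x h : holds (sect F x) -> (holds h <-> proj1_sig base (proj1_sig h x)).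
Proof.
  intros Hx; rewrite ptE_decomp; split; [| eauto].
  intros [y [Hy Hhy]]; apply (equivp_local F base (proj1_sig h) y x (Ehom_local F h)); auto.
  apply equivp_sym, point_eqval, (ptE_le _ _ (meet_sect_le F x y)), ptE_meet; auto.
Qed.

Lemma ptE_sect_equivp x y : holds (sect F x) -> (holds (sect F y) <-> equivp L F base x y).
Proof.
  intros Hx; rewrite (ptE_sect_iff x _ Hx); simpl; rewrite eqval_sym.
  exact (point_eqval F base x y).
Qed.
End PointsOfEtale.

Section PointsAsGerms.
Context {L : Frame} {F : BJset L}.

Lemma germ_is_point (p : ptL L) (x : F) :
  is_point (Ehom L F) (Ele L F) (fun h => proj1_sig p (proj1_sig h x)).
Proof.
  pose proof (proj2_sig p) as Hp; split; [| split].
  - intros t Ht; rewrite (top_le _ (Ht (cstE F top) x)); apply point_top, Hp.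
  - intros h k m Hm; rewrite (glb_pointwise F h k m Hm); apply point_meet, Hp.
  - intros S m Hm; rewrite (lub_pointwise F S m Hm); simpl; rewrite (point_join _ Hp); split.
    + intros [u [[h [Sh ->]] Hu]]; eauto.
    + intros [h [Sh Hh]]; eauto.
Qed.

Definition germ (p : ptL L) (x : F) : ptE L F := exist _ _ (germ_is_point p x).

Lemma base_germ p x : base (germ p x) = p.
Proof. apply eq_sig_hprop; [intros; apply proof_irrelevance | reflexivity]. Qed.

Definition germ_class (P : ptE L F) : F -> Prop := fun y => proj1_sig P (sect F y).

Lemma germ_class_cls P x : germ_class P = cls L F (base P) x <-> proj1_sig P (sect F x).
Proof.
  split.
  - intros E; change (germ_class P x); rewrite E; apply equivp_refl.
  - intros Hx; apply functional_extensionality; intros y; apply propositional_extensionality.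
    apply ptE_sect_equivp, Hx.
Qed.

Definition to_sum (P : ptE L F) : SumSp L F :=
  exist _ (base P, germ_class P)
    (let (x, Hx) := ptE_has_sect P in ex_intro _ x (proj2 (germ_class_cls P x) Hx)).

Lemma to_sum_inj P Q : to_sum P = to_sum Q -> P = Q.
Proof.
  intros E.
  assert (Ebase : base P = base Q) by exact (f_equal (fun s => fst (proj1_sig s)) E).
  assert (Eclass : germ_class P = germ_class Q) by exact (f_equal (fun s => snd (proj1_sig s)) E).
  destruct (ptE_has_sect P) as [x Hx].
  assert (HQx : proj1_sig Q (sect F x)) by (change (germ_class Q x); rewrite <- Eclass; exact Hx).
  apply eq_sig_hprop; [intros; apply proof_irrelevance |].
  apply functional_extensionality; intros h; apply propositional_extensionality.
  rewrite (ptE_sect_iff P x h Hx), (ptE_sect_iff Q x h HQx), Ebase; reflexivity.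
Qed.

Lemma to_sum_surj (s : SumSp L F) : exists P, to_sum P = s.
Proof.
  destruct s as [[p C] [x HC]]; simpl in HC; subst C; exists (germ p x).
  apply eq_sig_hprop; [intros; apply proof_irrelevance |]; simpl.
  rewrite base_germ; f_equal; apply functional_extensionality; intros y.
  change (proj1_sig p (eqval F y x) = equivp L F p x y); rewrite eqval_sym.
  apply propositional_extensionality, point_eqval.
Qed.

Definition subbasic_open (x : F) (b : B L) (s : SumSp L F) : Prop :=
  proj1_sig (fst (proj1_sig s)) (proj1_sig b) /\
  snd (proj1_sig s) = cls L F (fst (proj1_sig s)) x.

Lemma to_sum_subbasic P x b :
  subbasic_open x b (to_sum P) <-> proj1_sig P (meetE F (sect F x) (cstE F (proj1_sig b))).
Proof. unfold subbasic_open; simpl; rewrite ptE_meet, germ_class_cls; tauto. Qed.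

Lemma open_preimage_to_sum U :
  gen_open (SumSp L F) (subbasic L F) U -> opens_ptE L F (fun P => U (to_sum P)).
Proof.
  induction 1 as [U HU | | U V _ IHU _ IHV | G _ IH | U V _ IHU HUV].
  - destruct HU as [x [b HU]]; exists (meetE F (sect F x) (cstE F (proj1_sig b))); intros P.
    rewrite HU; apply to_sum_subbasic.
  - exists (cstE F top); intros P; split; [intros _; apply ptE_top | auto].
  - destruct IHU as [h Hh], IHV as [k Hk]; exists (meetE F h k); intros P.
    rewrite ptE_meet, Hh, Hk; reflexivity.
  - exists (joinE F (fun h => exists U, G U /\ forall P, U (to_sum P) <-> proj1_sig P h)).
    intros P; rewrite (proj2 (proj2 (proj2_sig P)) _ _ (joinE_lub F _)); split.
    + intros [U [GU HU]]; destruct (IH U GU) as [h Hh]; exists h; split; [eauto | apply Hh, HU].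
    + intros [h [[U [GU Hh]] HPh]]; exists U; split; [exact GU | apply Hh, HPh].
  - destruct IHU as [h Hh]; exists h; intros P; rewrite <- HUV; apply Hh.
Qed.

Lemma gen_open_of_open_preimage U : zero_dimensional L ->
  opens_ptE L F (fun P => U (to_sum P)) -> gen_open (SumSp L F) (subbasic L F) U.
Proof.
  intros Hzd [h Hh].
  apply go_ext with (fun s => exists W, (exists x (b : B L),
    le (proj1_sig b) (proj1_sig h x) /\ W = subbasic_open x b) /\ W s).
  { apply go_union; intros W [x [b [_ ->]]]; apply go_sub; exists x, b; reflexivity. }
  intros s; destruct (to_sum_surj s) as [P <-]; rewrite Hh, ptE_decomp; split.
  - intros [W [[x [b [Hbh ->]]] HPb]]; apply to_sum_subbasic, ptE_meet in HPb.
    exists x; split; [apply HPb | apply (point_le _ (proj2_sig (base P)) _ _ Hbh), HPb].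
  - intros [x [Hx Hhx]]; destruct (Hzd (proj1_sig h x)) as [S [HS HSh]].
    rewrite <- HSh in Hhx; apply (point_join _ (proj2_sig (base P))) in Hhx.
    destruct Hhx as [u [Su Hu]]; exists (subbasic_open x (exist _ u (HS u Su))); split.
    + exists x, (exist _ u (HS u Su)); split; [rewrite <- HSh; apply join_ub, Su | reflexivity].
    + apply to_sum_subbasic, ptE_meet; split; assumption.
Qed.
End PointsAsGerms.

Theorem proposition2p20 (L : Frame) (F : BJset L) :
  ultraparacompact L -> (@bot L) <> (@top L) ->
  exists f : ptE L F -> SumSp L F,
    homeomorphism (ptE L F) (SumSp L F) (opens_ptE L F) (gen_open (SumSp L F) (subbasic L F)) f.
Proof.
  intros [Hzd _] _; exists to_sum; split; [| split].
  - exact to_sum_inj.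
  - exact to_sum_surj.
  - intros U; split; [apply open_preimage_to_sum | apply gen_open_of_open_preimage; exact Hzd].
Qed.
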